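(* Let $f(X)=N(N-1)\sum_{i=1}^{\ell}\beta_i\,t(H_i,X)$ be a subgraph-counting function. Then for every $X\in\{0,1\}^n$ and every index $j\in[n]$, $$|\partial_jf(X)|\le\sum_{i=1}^{\ell}|\beta_i|\,|E(H_i)|.$$
   Context: $n=\binom N2$; $X\in\{0,1\}^n$ is identified with a simple graph on $[N]$ (coordinates indexed by unordered pairs). For a finite simple graph $H$ on $[m]$, $t(H,X)$ is the number of injective homomorphisms $H\to X$ divided by $N(N-1)\cdots(N-m+1)$. $\partial_jf(X)=\frac12\big(f(X_1,\dots,X_{j-1},1,X_{j+1},\dots,X_n)-f(X_1,\dots,X_{j-1},0,X_{j+1},\dots,X_n)\big)$. *)

From mathcomp Require Import all_boot all_order all_algebra.
From mathcomp Require Import reals.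
Set Implicit Arguments. Unset Strict Implicit. Unset Printing Implicit Defensive.
Import Order.TTheory GRing.Theory Num.Theory.
Local Open Scope ring_scope.

(* Unordered pairs {u,v} (u <> v) of vertices of [N]; #|upair N| = 'C(N,2) = n.
   These index the coordinates of {0,1}^n. *)
Definition upair (N : nat) := {e : {set 'I_N} | #|e| == 2%N}.

(* X in {0,1}^n, identified with a simple graph on [N]. *)
Definition graph01 (N : nat) := {ffun upair N -> bool}.

Definition adj (N : nat) (X : graph01 N) (u v : 'I_N) : bool :=
  [exists e : upair N, (val e == [set u; v]) && X e].

(* A finite simple graph H on [m] is given by its edge set, a set of
   unordered pairs of [m]; |E(H)| = #|H|. *)
Definition inj_hom_count (N m : nat) (H : {set upair m}) (X : graph01 N) : nat :=
  #|[set phi : {ffun 'I_m -> 'I_N} | injectiveb phi &&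
     [forall e in H, forall u, forall v,
        (val e == [set u; v]) ==> adj X (phi u) (phi v)]]|.

Definition tdens (R : realType) (N m : nat) (H : {set upair m}) (X : graph01 N) : R :=
  (inj_hom_count H X)%:R / (N ^_ m)%:R.

Definition subgraph_f (R : realType) (N l : nat) (m : 'I_l -> nat)
  (H : forall i : 'I_l, {set upair (m i)}) (beta : 'I_l -> R) (X : graph01 N) : R :=
  (N%:R * (N%:R - 1)) * \sum_(i < l) beta i * tdens R (H i) X.

Definition setc (N : nat) (X : graph01 N) (j : upair N) (b : bool) : graph01 N :=
  [ffun k => if k == j then b else X k].

Definition dpart (R : realType) (N : nat) (f : graph01 N -> R) (j : upair N)
  (X : graph01 N) : R :=
  (f (setc X j true) - f (setc X j false)) / 2.

(* Setting coordinate j to 1 can only create injective homomorphisms H -> X,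
   and every new one maps some edge {a, b} of H onto the pair j. Composing with
   permutations of [N] shows that the injections [m] -> [N] are equidistributed
   over the N(N-1) possible values of (phi a, phi b), so at most 2 N^_m / (N(N-1))
   of them map {a, b} onto j. Hence N(N-1) times the increment of t(H, .) is at
   most 2 |E(H)|, and the bound follows by the triangle inequality. *)

From mathcomp Require Import all_boot all_order all_algebra all_fingroup.
From mathcomp Require Import reals ring.
Import Order.TTheory GRing.Theory Num.Theory.
Set Implicit Arguments. Unset Strict Implicit.

Lemma leq_card_bigcup (I T : finType) (P : pred I) (A : I -> {set T}) :
  (#|\bigcup_(i | P i) A i| <= \sum_(i | P i) #|A i|)%N.
Proof.
elim/big_rec2: _ => [|i n B _ leBn]; first by rewrite cards0.
by apply: leq_trans (leq_card_setU _ _) _; rewrite leq_add2l.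
Qed.

Lemma perm_pair_exists (T : finType) (x y x' y' : T) :
  x != y -> x' != y' -> exists s : {perm T}, s x = x' /\ s y = y'.
Proof.
move=> neq_xy neq_xy'; set z := tperm x x' y.
exists (tperm x x' * tperm y' z)%g; rewrite !permM tpermL tpermR; split=> //.
apply: tpermD; first by rewrite eq_sym.
by rewrite -[x' in _ != x'](tpermL x x') (inj_eq perm_inj) eq_sym.
Qed.

Section InjectionFibres.

Variables aT rT : finType.

Definition inj_fibre (a b : aT) (x y : rT) :=
  [set f : {ffun aT -> rT} | [&& injectiveb f, f a == x & f b == y]].

Lemma leq_card_inj_fibre (a b : aT) (x y x' y' : rT) :
  x != y -> x' != y' -> (#|inj_fibre a b x y| <= #|inj_fibre a b x' y'|)%N.
Proof.
move=> neq_xy neq_xy'; have [s [sx sy]] := perm_pair_exists neq_xy neq_xy'.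
pose F (f : {ffun aT -> rT}) : {ffun aT -> rT} := finfun (s \o f).
have F_inj : injective F.
  move=> f g /ffunP eqFfg; apply/ffunP=> i.
  by apply: (@perm_inj _ s); have := eqFfg i; rewrite !ffunE.
rewrite -(card_imset _ F_inj); apply/subset_leq_card/subsetP=> _ /imsetP[f + ->].
rewrite !inE !ffunE /= => /and3P[f_inj /eqP-> /eqP->].
rewrite sx sy !eqxx !andbT; apply/injectiveP=> i k; rewrite !ffunE.
by move/perm_inj/(injectiveP _ f_inj).
Qed.

Lemma card_inj_fibre_eq (a b : aT) (x y x' y' : rT) :
  x != y -> x' != y' -> #|inj_fibre a b x y| = #|inj_fibre a b x' y'|.
Proof. by move=> neq_xy neq_xy'; apply/anti_leq; rewrite !leq_card_inj_fibre. Qed.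

Lemma card_inj_fibre (a b : aT) (x y : rT) : a != b -> x != y ->
  (#|inj_fibre a b x y| * (#|rT| * #|rT|.-1) = #|rT| ^_ #|aT|)%N.
Proof.
move=> neq_ab neq_xy.
have fibre_diag x' : inj_fibre a b x' x' = set0.
  apply/setP=> f; rewrite !inE; apply/negP=> /and3P[/injectiveP f_inj /eqP fa /eqP fb].
  by move: neq_ab; rewrite (f_inj a b) ?eqxx // fa fb.
have partition_inj : #|[set f : {ffun aT -> rT} | injectiveb f]| =
    (\sum_(x' : rT) \sum_(y' : rT) #|inj_fibre a b x' y'|)%N.
  rewrite -sum1_card (partition_big (fun f : {ffun aT -> rT} => (f a, f b)) xpredT) //.
  rewrite pair_big; apply: eq_bigr=> -[x' y'] _ /=; rewrite -sum1_card.
  by apply: eq_bigl=> f; rewrite !inE xpair_eqE.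
rewrite -card_inj_ffuns partition_inj.
rewrite (eq_bigr (fun _ => #|inj_fibre a b x y| * #|rT|.-1)%N) => [|x' _].
  by rewrite sum_nat_const mulnCA.
rewrite (bigD1 x') //= fibre_diag cards0 add0n.
rewrite (eq_bigr (fun _ => #|inj_fibre a b x y|)) => [|y' neq_y'x'].
  by rewrite sum_nat_const cardC1 mulnC.
by apply: card_inj_fibre_eq; rewrite // eq_sym.
Qed.

Lemma card_inj_onto_pair (e : {set aT}) (p : {set rT}) :
  #|e| == 2 -> #|p| == 2 ->
  (#|rT| * #|rT|.-1 * #|[set f : {ffun aT -> rT} | injectiveb f && (f @: e == p)]|
     <= 2 * #|rT| ^_ #|aT|)%N.
Proof.
case/cards2P=> a [b [neq_ab ->]]; case/cards2P=> x [y [neq_xy ->]].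
set S := [set f | _].
have sub_S : S \subset inj_fibre a b x y :|: inj_fibre a b y x.
  apply/subsetP=> f; rewrite !inE => /andP[f_inj /eqP onto].
  have fa : f a \in [set x; y] by rewrite -onto imset_f ?set21.
  have fb : f b \in [set x; y] by rewrite -onto imset_f ?set22.
  have neq_fab : f a != f b by apply: contra_neq neq_ab; apply: (injectiveP _ f_inj).
  move: fa fb neq_fab; rewrite f_inj !in_set2.
  by case/orP=> /eqP-> /orP[]/eqP->; rewrite ?eqxx ?orbT.
have le_S := leq_trans (subset_leq_card sub_S) (leq_card_setU _ _).
apply: leq_trans (leq_mul (leqnn _) le_S) _.
rewrite mulnDr ![(_ * _ * #|inj_fibre _ _ _ _|)%N]mulnC.
by rewrite !card_inj_fibre // ?mul2n ?addnn // eq_sym.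
Qed.

End InjectionFibres.

Lemma adj_mono (N : nat) (X Y : graph01 N) :
  (forall k, X k -> Y k) -> forall u v, adj X u v -> adj Y u v.
Proof.
move=> leXY u v /existsP[e /andP[eq_e Xe]].
by apply/existsP; exists e; rewrite eq_e leXY.
Qed.

Lemma setc_mono (N : nat) (X : graph01 N) (j : upair N) k :
  setc X j false k -> setc X j true k.
Proof. by rewrite !ffunE; case: (k == j). Qed.

Section InjectiveHomomorphisms.

Variables (N m : nat) (H : {set upair m}).

Definition inj_homs (X : graph01 N) :=
  [set phi : {ffun 'I_m -> 'I_N} | injectiveb phi &&
     [forall e in H, forall u, forall v,
        (val e == [set u; v]) ==> adj X (phi u) (phi v)]].

Lemma card_inj_homs (X : graph01 N) : inj_hom_count H X = #|inj_homs X|.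
Proof. by []. Qed.

Lemma inj_homs_mono (X Y : graph01 N) :
  (forall k, X k -> Y k) -> inj_homs X \subset inj_homs Y.
Proof.
move=> leXY; apply/subsetP=> phi; rewrite !inE => /andP[-> /forallP homX] /=.
apply/forallP=> e; apply/implyP=> eH; apply/forallP=> u; apply/forallP=> v.
apply/implyP=> eq_e; apply: adj_mono leXY _ _ _.
by move: (homX e); rewrite eH => /forallP/(_ u)/forallP/(_ v); rewrite eq_e.
Qed.

Lemma inj_homs_setcD_sub (X : graph01 N) (j : upair N) :
  inj_homs (setc X j true) :\: inj_homs (setc X j false) \subset
  \bigcup_(e in H) [set phi : {ffun 'I_m -> 'I_N} | injectiveb phi && (phi @: val e == val j)].
Proof.
apply/subsetP=> phi; rewrite !inE => /andP[+ /andP[phi_inj hom1]].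
rewrite phi_inj /= => /forallPn[e]; rewrite negb_imply => /andP[eH].
case/forallPn=> u; case/forallPn=> v; rewrite negb_imply => /andP[eq_e not_adj0].
apply/bigcupP; exists e => //; rewrite inE phi_inj (eqP eq_e) imsetU1 imset_set1 /=.
move/forallP: hom1 => /(_ e); rewrite eH => /forallP/(_ u)/forallP/(_ v).
rewrite eq_e => /existsP[k /andP[/eqP eq_k]].
rewrite ffunE; case: eqP => [eq_kj _|neq_kj Xk]; first by rewrite -eq_k eq_kj.
case/negP: not_adj0; apply/existsP; exists k.
by rewrite eq_k eqxx ffunE (introF eqP neq_kj).
Qed.

Lemma card_inj_homs_setcD (X : graph01 N) (j : upair N) :
  (N * N.-1 * #|inj_homs (setc X j true) :\: inj_homs (setc X j false)|
     <= 2 * #|H| * N ^_ m)%N.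
Proof.
apply: leq_trans (leq_mul (leqnn _) (subset_leq_card (inj_homs_setcD_sub X j))) _.
apply: leq_trans (leq_mul (leqnn _) (leq_card_bigcup _ _)) _.
rewrite big_distrr /=; apply: (@leq_trans (\sum_(e in H) 2 * N ^_ m)%N).
  apply: leq_sum=> e _.
  by have:= card_inj_onto_pair (valP e) (valP j); rewrite !card_ord.
by rewrite sum_nat_const mulnCA mulnA.
Qed.

End InjectiveHomomorphisms.

Local Open Scope ring_scope.

Lemma natr_mul_predn (R : pzRingType) (N : nat) :
  N%:R * (N%:R - 1) = (N * N.-1)%N%:R :> R.
Proof. by case: N => [|N]; rewrite ?mul0r // natrM -natr1 addrK. Qed.

Section DensityIncrement.

Variables (R : realType) (N m : nat) (H : {set upair m}) (X : graph01 N) (j : upair N).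

Let D := inj_homs H (setc X j true) :\: inj_homs H (setc X j false).

Lemma tdens_setc_diff :
  tdens R H (setc X j true) - tdens R H (setc X j false) = #|D|%:R / (N ^_ m)%:R.
Proof.
have sub01 := inj_homs_mono H (@setc_mono N X j).
rewrite /tdens !card_inj_homs -mulrBl -natrB; last exact: subset_leq_card.
by rewrite /D cardsD (setIidPr sub01).
Qed.

Lemma tdens_setc_diff_ge0 : 0 <= tdens R H (setc X j true) - tdens R H (setc X j false).
Proof. by rewrite tdens_setc_diff divr_ge0. Qed.

Lemma tdens_setc_diff_le :
  N%:R * (N%:R - 1) * (tdens R H (setc X j true) - tdens R H (setc X j false))
    <= 2 * #|H|%:R.
Proof.
rewrite tdens_setc_diff natr_mul_predn.
have [->|ffact_neq0] := eqVneq (N ^_ m)%N 0%N.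
  by rewrite mulr0n invr0 !mulr0 mulr_ge0 ?ler0n.
rewrite mulrA ler_pdivrMr ?ltr0n ?lt0n // -!natrM ler_nat.
exact: card_inj_homs_setcD.
Qed.

End DensityIncrement.

Theorem lemma26 (R : realType) (N l : nat) (m : 'I_l -> nat)
  (H : forall i : 'I_l, {set upair (m i)}) (beta : 'I_l -> R)
  (X : graph01 N) (j : upair N) :
  `|dpart (subgraph_f H beta) j X| <= \sum_(i < l) `|beta i| * (#|H i|)%:R.
Proof.
set K : R := N%:R * (N%:R - 1).
pose d i := tdens R (H i) (setc X j true) - tdens R (H i) (setc X j false).
have -> : dpart (subgraph_f H beta) j X = \sum_(i < l) beta i * (K * d i / 2).
  rewrite /dpart /subgraph_f -/K -mulrBr -sumrB big_distrr /= mulr_suml.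
  by apply: eq_bigr => i _; rewrite /d; ring.
have K_ge0 : 0 <= K by rewrite /K natr_mul_predn.
apply: le_trans (ler_norm_sum _ _ _) _; apply: ler_sum => i _.
rewrite normrM [`|K * _ / 2|]ger0_norm; last first.
  by rewrite divr_ge0 // mulr_ge0 // tdens_setc_diff_ge0.
rewrite ler_wpM2l // ler_pdivrMr // [X in _ <= X]mulrC.
exact: tdens_setc_diff_le.
Qed.
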